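(* In the inexact augmented Lagrangian method described in the context, for every $t\ge1$, writing $\bar d(\lambda_t):=\mathcal{L}^\beta(x_{t+1},\lambda_t)$ and $g_t:=Ax_{t+1}-b$: (a) $d(\lambda)\le\bar d(\lambda_t)+\langle g_t,\lambda-\lambda_t\rangle$ for all $\lambda\in\mathbb{R}^m$; (b) $d(\lambda_{t+1})\ge\bar d(\lambda_t)+\frac{\beta}{4}\|g_t\|^2-2\epsilon_t$.
   Context: Problem: $\min_{x\in\mathcal{X}}f(x)$ s.t. $Ax=b$, with $f:\mathbb{R}^n\to\mathbb{R}$ convex and differentiable, $\mathcal{X}\subseteq\mathbb{R}^n$ nonempty, closed, bounded and convex, $A\in\mathbb{R}^{m\times n}$, $b\in\mathbb{R}^m$. Augmented Lagrangian $\mathcal{L}^\beta(x,\lambda)=f(x)+\langle\lambda,Ax-b\rangle+\frac{\beta}{2}\|Ax-b\|^2$, $\beta>0$; dual function $d(\lambda)=\min_{x\in\mathcal{X}}\mathcal{L}^\beta(x,\lambda)$; Euclidean norms. Method: given $x_1\in\mathcal{X}$, $\lambda_1$, nonnegative $(\epsilon_t)$, for $t\ge1$ choose $x_{t+1}\in\mathcal{X}$ with $\mathcal{L}^\beta(x_{t+1},\lambda_t)-d(\lambda_t)\le\epsilon_t$ and set $\lambda_{t+1}=\lambda_t+\frac{\beta}{2}(Ax_{t+1}-b)$. *)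

From HB Require Import structures.
From mathcomp Require Import all_boot all_order all_algebra.
From mathcomp Require Import all_classical all_reals all_analysis.
Set Implicit Arguments. Unset Strict Implicit. Unset Printing Implicit Defensive.
Import Order.TTheory GRing.Theory Num.Theory.
Local Open Scope classical_set_scope.
Local Open Scope ring_scope.

Definition dotv {R : realType} {k : nat} (u v : 'cV[R]_k) : R :=
  \sum_(i < k) u i 0 * v i 0.
Definition enorm {R : realType} {k : nat} (u : 'cV[R]_k) : R :=
  Num.sqrt (dotv u u).

Definition auglag {R : realType} {n m : nat} (f : 'cV[R]_n -> R)
  (A : 'M[R]_(m, n)) (b : 'cV[R]_m) (beta : R) (x : 'cV[R]_n) (lam : 'cV[R]_m) : R :=
  f x + dotv lam (A *m x - b) + beta / 2 * (enorm (A *m x - b)) ^+ 2.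

(* Dual function d(lambda) = min_{x in X} L^beta(x, lambda), written as an infimum
   (the minimum is attained since X is compact and L continuous). *)
Definition dualfun {R : realType} {n m : nat} (f : 'cV[R]_n -> R)
  (A : 'M[R]_(m, n)) (b : 'cV[R]_m) (beta : R) (X : set 'cV[R]_n) (lam : 'cV[R]_m) : R :=
  inf [set auglag f A b beta x lam | x in X].

From HB Require Import structures.
From mathcomp Require Import all_boot all_order all_algebra.
From mathcomp Require Import all_classical all_reals all_analysis.
From mathcomp Require Import ring lra.
Set Implicit Arguments.
Unset Strict Implicit.
Unset Printing Implicit Defensive.

Import Order.TTheory GRing.Theory Num.Theory numFieldNormedType.Exports.
Local Open Scope classical_set_scope.
Local Open Scope ring_scope.

(* Part (a): L^beta(x, .) is affine in lambda with slope A x - b, and d is an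
   infimum over X.  Part (b): for z in X the midpoint y of x_{t+1} and z lies in
   X, and convexity of f together with the parallelogram-type expansion of the
   penalty gives
     L(z, lambda_{t+1}) >= 2 L(y, lambda_t) - L(x_{t+1}, lambda_t) + beta/4 |g_t|^2,
   while 2 L(y, lambda_t) >= 2 d(lambda_t) >= 2 L(x_{t+1}, lambda_t) - 2 eps_t.
   The infimum defining d must be shown bounded below (otherwise [inf] returns a
   junk value): f is continuous on the compact X and
   L^beta(z, lambda) >= f z - |lambda|^2 / (2 beta). *)

Lemma mx_norm_trmx (R : realType) p q (x : 'M[R]_(p, q)) : `|x^T| = `|x|.
Proof.
have swap_bij : bijective (fun ij : 'I_p * 'I_q => (ij.2, ij.1)).
  by exists (fun ji : 'I_q * 'I_p => (ji.2, ji.1)) => -[].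
change (mx_norm x^T = mx_norm x).
rewrite !mx_normrE (reindex _ (onW_bij _ swap_bij)).
by apply: eq_bigr => -[i j] _; rewrite mxE.
Qed.

Lemma trmx_continuous (R : realType) p q : continuous (@trmx R p q).
Proof.
move=> x; apply/(@cvgrPdist_lt _ _ _ (nbhs x)) => e e_gt0; near=> y.
by rewrite -linearB mx_norm_trmx; near: y; apply: cvgr_dist_lt.
Unshelve. all: by end_near. Qed.

(* The library proves Heine-Borel for row vectors only; transpose. *)
Lemma bounded_closed_compact_cV (R : realType) n (X : set 'cV[R]_n) :
  bounded_set X -> closed X -> compact X.
Proof.
move=> Xbd Xcl; pose Y := (@trmx R 1 n) @^-1` X.
have -> : X = (@trmx R 1 n) @` Y.
  apply/seteqP; split => [v Xv|_ [w Yw <-] //].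
  by exists v^T; rewrite /Y /= trmxK.
apply: continuous_compact; first exact/continuous_subspaceT/trmx_continuous.
apply: bounded_closed_compact; last first.
  by apply: preimage_closed Xcl => w _; apply: trmx_continuous.
case: Xbd => M [Mreal XM]; exists M; split => // r Mr w Yw.
by move: (XM r Mr _ Yw); rewrite /= (mx_norm_trmx w).
Qed.

Lemma compact_has_lbound (T : topologicalType) (R : realType) (f : T -> R)
    (A : set T) :
  compact A -> {within A, continuous f} -> has_lbound (f @` A).
Proof.
have [->|/set0P A0] := eqVneq A set0; first by rewrite image_set0; exists 0.
move=> Acpt fcont; have [c _ fcmin] := compact_EVT_min A0 Acpt fcont.
by exists (f c) => _ [t At <-]; apply/fcmin/mem_set.
Qed.

Section midpoint.
Context {R : numFieldType} {E : lmodType R}.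

Let half_le1 : 2^-1 <= 1 :> R.
Proof. by rewrite invf_le1 ?ler1n. Qed.

Let half : {i01 R} := Itv01 [ge0 of (2^-1 : R)] half_le1.

Let onem_half : unstable.onem 2^-1 = 2^-1 :> R.
Proof. by rewrite /unstable.onem {1}(splitr 1) mul1r addrK. Qed.

Let conv_halfE (x y : convex_lmodType E) : conv half x y = 2^-1 *: (x + y) :> E.
Proof. by rewrite /conv /= onem_half scalerDr. Qed.

Lemma convex_set_midpoint (X : set (convex_lmodType E)) (x y : E) :
  convex_set X -> X x -> X y -> X (2^-1 *: (x + y)).
Proof.
by move=> Xcvx Xx Xy; rewrite -conv_halfE -inE; apply: Xcvx; rewrite inE.
Qed.

Lemma convex_function_midpoint (f : convex_lmodType E -> R) (x y : E) :
  convex_function setT f -> f (2^-1 *: (x + y)) <= 2^-1 * (f x + f y).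
Proof.
move=> /(_ half x y (mem_set I) (mem_set I)); rewrite conv_halfE.
by rewrite convRE /= onem_half mulrDr.
Qed.

End midpoint.

Section dotv.
Context {R : realType} {k : nat}.
Implicit Types u v w : 'cV[R]_k.

Lemma dotvC u v : dotv u v = dotv v u.
Proof. by apply: eq_bigr => i _; rewrite mulrC. Qed.

Lemma dotvDl u v w : dotv (u + v) w = dotv u w + dotv v w.
Proof. by rewrite /dotv -big_split; apply: eq_bigr => i _; rewrite mxE mulrDl. Qed.

Lemma dotvBl u v w : dotv (u - v) w = dotv u w - dotv v w.
Proof. by rewrite /dotv -sumrB; apply: eq_bigr => i _; rewrite !mxE mulrBl. Qed.

Lemma dotvZl a u w : dotv (a *: u) w = a * dotv u w.
Proof. by rewrite /dotv mulr_sumr; apply: eq_bigr => i _; rewrite mxE mulrA. Qed.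

Lemma dotvDr u v w : dotv w (u + v) = dotv w u + dotv w v.
Proof. by rewrite !(dotvC w) dotvDl. Qed.

Lemma dotvZr a u w : dotv w (a *: u) = a * dotv w u.
Proof. by rewrite !(dotvC w) dotvZl. Qed.

Lemma dotvv_ge0 u : 0 <= dotv u u.
Proof. by apply: sumr_ge0 => i _; rewrite -expr2 sqr_ge0. Qed.

Lemma enorm_sqr u : enorm u ^+ 2 = dotv u u.
Proof. by rewrite sqr_sqrtr // dotvv_ge0. Qed.

End dotv.

Section auglag.
Context {R : realType} {n m : nat}.
Context (f : 'cV[R]_n -> R) (A : 'M[R]_(m, n)) (b : 'cV[R]_m).
Implicit Types (beta : R) (x z : 'cV[R]_n) (l : 'cV[R]_m).

Lemma auglag_ge beta z l : 0 < beta ->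
  f z - dotv l l / (2 * beta) <= auglag f A b beta z l.
Proof.
move=> beta_gt0; rewrite /auglag enorm_sqr; move: (A *m z - b) => g.
have -> : f z + dotv l g + beta / 2 * dotv g g = f z - dotv l l / (2 * beta)
    + dotv (l + beta *: g) (l + beta *: g) / (2 * beta).
  by rewrite !(dotvDl, dotvDr, dotvZl, dotvZr) (dotvC g l); field; rewrite gt_eqF.
by rewrite lerDl divr_ge0 ?dotvv_ge0 ?mulr_ge0 ?ltW.
Qed.

Lemma auglag_shift beta z l l' :
  auglag f A b beta z l = auglag f A b beta z l' + dotv (A *m z - b) (l - l').
Proof. by rewrite /auglag (dotvC _ (l - l')) dotvBl; ring. Qed.

Lemma auglag_midpoint beta x z l : 0 <= beta ->
  f (2^-1 *: (x + z)) <= 2^-1 * (f x + f z) ->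
  2 * auglag f A b beta (2^-1 *: (x + z)) l - auglag f A b beta x l
    + beta / 4 * enorm (A *m x - b) ^+ 2
  <= auglag f A b beta z (l + beta / 2 *: (A *m x - b)).
Proof.
move=> beta_ge0 f_mid; rewrite /auglag.
have -> : A *m (2^-1 *: (x + z)) - b = 2^-1 *: ((A *m x - b) + (A *m z - b)).
  rewrite -scalemxAr mulmxDr addrACA -opprD scalerBr -mulr2n -scalerMnr.
  by rewrite scalerMnl -[2^-1 *+ 2]mulr_natr mulVf ?pnatr_eq0 // scale1r.
rewrite !enorm_sqr; have := dotvv_ge0 (A *m z - b).
move: (A *m x - b) (A *m z - b) => g u u_ge0.
rewrite !(dotvDl, dotvDr, dotvZl, dotvZr) (dotvC u g).
have : 0 <= beta * dotv u u by rewrite mulr_ge0.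
lra.
Qed.

End auglag.

Section dualfun.
Context {R : realType} {n m : nat}.
Context (f : 'cV[R]_n -> R) (A : 'M[R]_(m, n)) (b : 'cV[R]_m).
Context (beta : R) (X : set 'cV[R]_n).

Lemma dualfun_le l z : 0 < beta -> has_lbound (f @` X) -> X z ->
  dualfun f A b beta X l <= auglag f A b beta z l.
Proof.
move=> beta_gt0 [c c_lb] Xz; apply: ge_inf; last by exists z.
exists (c - dotv l l / (2 * beta)) => _ [y Xy <-].
apply: le_trans (auglag_ge f A b y l beta_gt0).
by rewrite lerD2r c_lb //; exists y.
Qed.

Lemma le_dualfun c l : X !=set0 ->
  (forall z, X z -> c <= auglag f A b beta z l) -> c <= dualfun f A b beta X l.
Proof.
move=> [z Xz] c_lb; apply: lb_le_inf; first by exists (auglag f A b beta z l), z.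
by move=> _ [y Xy <-]; apply: c_lb.
Qed.

End dualfun.

Theorem lemma9 (R : realType) (n m : nat) (f : 'cV[R]_n -> R)
  (X : set 'cV[R]_n) (A : 'M[R]_(m, n)) (b : 'cV[R]_m) (beta : R)
  (x : nat -> 'cV[R]_n) (lam : nat -> 'cV[R]_m) (eps : nat -> R) :
  convex_function (setT : set (convex_lmodType 'cV[R]_n)) f ->
  (forall z : 'M[R]_(n, 1), differentiable (f : 'M[R]_(n, 1) -> R^o) z) ->
  X !=set0 -> closed X -> bounded_set X ->
  convex_set (X : set (convex_lmodType 'cV[R]_n)) ->
  0 < beta ->
  (forall t, 0 <= eps t) ->
  X (x 1%N) ->
  (forall t : nat, (1 <= t)%N ->
     X (x t.+1) /\
     auglag f A b beta (x t.+1) (lam t) - dualfun f A b beta X (lam t) <= eps t /\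
     lam t.+1 = lam t + (beta / 2) *: (A *m x t.+1 - b)) ->
  forall t : nat, (1 <= t)%N ->
    (forall l : 'cV[R]_m,
       dualfun f A b beta X l <=
       auglag f A b beta (x t.+1) (lam t) + dotv (A *m x t.+1 - b) (l - lam t)) /\
    dualfun f A b beta X (lam t.+1) >=
       auglag f A b beta (x t.+1) (lam t) + beta / 4 * (enorm (A *m x t.+1 - b)) ^+ 2
       - 2 * eps t.
Proof.
move=> f_cvx f_diff X0 Xcl Xbd X_cvx beta_gt0 _ _ step t t_ge1.
have f_lb : has_lbound (f @` X).
  apply: compact_has_lbound; first exact: bounded_closed_compact_cV.
  by apply/continuous_subspaceT => z; apply/differentiable_continuous.
have [Xx [x_eps ->]] := step t t_ge1.
split => [l|]; first by rewrite -auglag_shift; apply: dualfun_le.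
apply: le_dualfun => // z Xz.
have Xmid := convex_set_midpoint X_cvx Xx Xz.
have := dualfun_le A b (lam t) beta_gt0 f_lb Xmid.
have f_mid := convex_function_midpoint (x t.+1) z f_cvx.
have := auglag_midpoint A b (lam t) (ltW beta_gt0) f_mid.
lra.
Qed.
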